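(* Consider ridgeless least-squares regression with training design matrix $X\in\mathbb{R}^{M\times N_f}$ (rows $\vec{x}_a^T$ drawn from a distribution with invertible covariance), labels $y(\vec{x})=y^*(\vec{x})+\varepsilon$, model features $\vec{z}(\vec{x})\in\mathbb{R}^{N_p}$, feature matrix $Z$ with rows $\vec{z}(\vec{x}_a)^T$, and predictor $\hat{y}(\vec{x})=\vec{z}(\vec{x})\cdot Z^+\vec{y}$. Let $\vec{\beta}=\Sigma_{\vec{x}}^{-1}\operatorname{Cov}_{\vec{x}}[\vec{x},y(\vec{x})]$, $W=\Sigma_{\vec{x}}^{-1}\operatorname{Cov}_{\vec{x}}[\vec{x},\vec{z}(\vec{x})^T]$, $P_f=(WZ^+X)^T$, $\hat{x}=P_f\vec{x}$, $\Delta\vec{x}=(I_{N_f}-P_f)\vec{x}$, and $\mathcal{E}_{\mathrm{geom}}=(\Delta\vec{x}\cdot\vec{\beta})^2$. Suppose there is no label noise ($\varepsilon=0$ for training and test points) and no nonlinearity, i.e. $y^*(\vec{x})=\vec{x}\cdot\vec{\beta}$ and $\vec{z}(\vec{x})=W^T\vec{x}$ for all $\vec{x}$. Then for any test point $\vec{x}$, with expectations over the random training set $\mathcal{D}$: $\mathbb{E}_{\mathcal{D}}[(y(\vec{x})-\hat{y}(\vec{x}))^2]=\mathbb{E}_{\mathcal{D}}[\mathcal{E}_{\mathrm{geom}}]$, $\mathbb{E}_{\mathcal{D}}[\hat{y}(\vec{x})]-y^*(\vec{x})=\mathbb{E}_{\mathcal{D}}[\hat{x}\cdot\vec{\beta}]-\vec{x}\cdot\vec{\beta}$,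 and $\operatorname{Var}_{\mathcal{D}}[\hat{y}(\vec{x})]=\operatorname{Var}_{\mathcal{D}}[\hat{x}\cdot\vec{\beta}]$.
   Context: $Z^+$ is the Moore–Penrose pseudoinverse; $\operatorname{Cov}_{\vec{x}}$ is covariance over the input distribution and $\Sigma_{\vec{x}}$ its covariance matrix. The standard test error, bias and variance of the predictor are $(y(\vec{x})-\hat{y}(\vec{x}))^2$, $\mathbb{E}_{\mathcal{D}}[\hat{y}(\vec{x})]-y^*(\vec{x})$ and $\operatorname{Var}_{\mathcal{D}}[\hat{y}(\vec{x})]$; the statement says these coincide with their geometric counterparts in this noiseless linear setting. *)

From HB Require Import structures.
From mathcomp Require Import all_boot all_order all_algebra.
From mathcomp Require Import all_classical all_reals all_analysis.
Set Implicit Arguments. Unset Strict Implicit. Unset Printing Implicit Defensive.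
Import Order.TTheory GRing.Theory Num.Theory.
Local Open Scope ring_scope.

Definition dotv (R : ringType) (n : nat) (u v : 'cV[R]_n) : R :=
  \sum_(i < n) u i 0 * v i 0.

(* B is the Moore--Penrose pseudoinverse of the real matrix A
   (the four Penrose equations; over the reals the adjoint is the transpose).
   The Moore--Penrose pseudoinverse exists and is unique. *)
Definition moore_penrose (R : ringType) (m n : nat)
  (A : 'M[R]_(m, n)) (B : 'M[R]_(n, m)) : Prop :=
  [/\ A *m B *m A = A, B *m A *m B = B,
      (A *m B)^T = A *m B & (B *m A)^T = B *m A].

Section InputStats.
Context {d : measure_display} {T : measurableType d} {R : realType}.
Variable (mu : probability T R).
Variable (Nf Np : nat).
Variable (xr : T -> 'cV[R]_Nf).

Definition rcov (f g : T -> R) : R := fine (covariance mu f g).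

Definition Sigma_x : 'M[R]_Nf :=
  \matrix_(i, j) rcov (fun t => xr t i 0) (fun t => xr t j 0).

Definition cov_x_y (y : 'cV[R]_Nf -> R) : 'cV[R]_Nf :=
  \col_i rcov (fun t => xr t i 0) (fun t => y (xr t)).

Definition cov_x_z (z : 'cV[R]_Nf -> 'cV[R]_Np) : 'M[R]_(Nf, Np) :=
  \matrix_(i, j) rcov (fun t => xr t i 0) (fun t => z (xr t) j 0).

Definition beta_of (y : 'cV[R]_Nf -> R) : 'cV[R]_Nf :=
  invmx Sigma_x *m cov_x_y y.

Definition W_of (z : 'cV[R]_Nf -> 'cV[R]_Np) : 'M[R]_(Nf, Np) :=
  invmx Sigma_x *m cov_x_z z.

End InputStats.

Definition feat_mx (R : ringType) (M Nf Np : nat)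
  (z : 'cV[R]_Nf -> 'cV[R]_Np) (X : 'M[R]_(M, Nf)) : 'M[R]_(M, Np) :=
  \matrix_(a, k) z (row a X)^T k 0.

Definition label_vec (R : ringType) (M Nf : nat)
  (y : 'cV[R]_Nf -> R) (X : 'M[R]_(M, Nf)) : 'cV[R]_M :=
  \col_a y (row a X)^T.

(* Predictor yhat(x) = z(x) . Z^+ y  (Zp plays the role of Z^+). *)
Definition yhat (R : ringType) (M Nf Np : nat)
  (z : 'cV[R]_Nf -> 'cV[R]_Np) (Zp : 'M[R]_(Np, M)) (yv : 'cV[R]_M)
  (x : 'cV[R]_Nf) : R :=
  dotv (z x) (Zp *m yv).

Definition Pf (R : ringType) (M Nf Np : nat) (W : 'M[R]_(Nf, Np))
  (Zp : 'M[R]_(Np, M)) (X : 'M[R]_(M, Nf)) : 'M[R]_Nf :=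
  (W *m Zp *m X)^T.

From HB Require Import structures.
From mathcomp Require Import all_boot all_order all_algebra.
From mathcomp Require Import all_classical all_reals all_analysis.
Set Implicit Arguments. Unset Strict Implicit. Unset Printing Implicit Defensive.
Import Order.TTheory GRing.Theory Num.Theory.
Local Open Scope ring_scope.

(* Without noise or nonlinearity the labels are [X beta] and the features are
   [W^T x], so [yhat(x) = x^T W Z^+ X beta = (P_f x) . beta] for every training
   set and every matrix in the role of [Z^+].  The three identities are then
   this equality (and [y(x) - yhat(x) = Delta x . beta]) put under [E_D] and
   [Var_D]. *)

Section DotProduct.
Variables (R : comRingType) (n : nat).
Implicit Types u v b : 'cV[R]_n.

Lemma dotvE u v : dotv u v = (u^T *m v) 0 0.
Proof. by rewrite /dotv mxE; apply: eq_bigr => i _; rewrite mxE. Qed.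

Lemma dotvBl u v b : dotv (u - v) b = dotv u b - dotv v b.
Proof. by rewrite !dotvE linearB /= mulmxBl !mxE. Qed.

End DotProduct.

Section LinearModel.
Variables (R : comRingType) (M Nf Np : nat).

Lemma label_vec_linear (y : 'cV[R]_Nf -> R) (b : 'cV[R]_Nf) (X : 'M[R]_(M, Nf)) :
  (forall x, y x = dotv x b) -> label_vec y X = X *m b.
Proof.
move=> yE; apply/matrixP => a j; rewrite (ord1 j) !mxE yE dotvE !mxE.
by apply: eq_bigr => k _; rewrite !mxE.
Qed.

Lemma yhat_linear_features (z : 'cV[R]_Nf -> 'cV[R]_Np) (W : 'M[R]_(Nf, Np))
    (Zp : 'M[R]_(Np, M)) (X : 'M[R]_(M, Nf)) (b x : 'cV[R]_Nf) :
  (forall x, z x = W^T *m x) ->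
  yhat z Zp (X *m b) x = dotv (Pf W Zp X *m x) b.
Proof.
by move=> zE; rewrite /yhat /Pf zE !dotvE !trmx_mul !trmxK !mulmxA.
Qed.

Lemma residual_linear (P : 'M[R]_Nf) (b x : 'cV[R]_Nf) :
  dotv x b - dotv (P *m x) b = dotv ((1%:M - P) *m x) b.
Proof. by rewrite mulmxBl mul1mx dotvBl. Qed.

End LinearModel.

Theorem theorem8
  (R : realType) (M Nf Np : nat)
  (* input distribution *)
  (din : measure_display) (Tin : measurableType din) (mu : probability Tin R)
  (xr : Tin -> 'cV[R]_Nf)
  (HSigma : Sigma_x mu xr \in unitmx)
  (* target function y^* and model features z *)
  (ystar : 'cV[R]_Nf -> R) (z : 'cV[R]_Nf -> 'cV[R]_Np)
  (* no nonlinearity *)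
  (Hy : forall x, ystar x = dotv x (beta_of mu xr ystar))
  (Hz : forall x, z x = (W_of mu xr z)^T *m x)
  (* random training set D: design matrix X, and Z^+ *)
  (dD : measure_display) (Om : measurableType dD) (PD : probability Om R)
  (X : Om -> 'M[R]_(M, Nf)) (Zp : Om -> 'M[R]_(Np, M))
  (HZp : forall w, moore_penrose (feat_mx z (X w)) (Zp w))
  (* test point *)
  (x : 'cV[R]_Nf) :
  let beta := beta_of mu xr ystar in
  let W := W_of mu xr z in
  (* no label noise: y = y^* at training and test points *)
  let yh := fun w => yhat z (Zp w) (label_vec ystar (X w)) x in
  let xhat := fun w => Pf W (Zp w) (X w) *m x in
  let dx := fun w => (1%:M - Pf W (Zp w) (X w)) *m x in
  let Egeom := fun w => (dotv (dx w) beta) ^+ 2 in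
  [/\ ('E_PD[fun w => ((ystar x - yh w) ^+ 2)%R] = 'E_PD[Egeom])%E,
      ('E_PD[yh] - (ystar x)%:E = 'E_PD[fun w => dotv (xhat w) beta]
                                   - (dotv x beta)%:E)%E
    & variance PD yh = variance PD (fun w => dotv (xhat w) beta)].
Proof.
move=> beta W yh xhat dx Egeom.
have yhE : yh = fun w => dotv (xhat w) beta.
  apply: funext => w.
  by rewrite /yh (label_vec_linear (X w) Hy) (yhat_linear_features (Zp w) (X w) beta x Hz).
have residualE w : ystar x - yh w = dotv (dx w) beta.
  by rewrite yhE Hy residual_linear.
split.
- by congr ('E_PD[_])%E; apply: funext => w; rewrite residualE.
- by rewrite yhE Hy.
- by rewrite yhE.
Qed.
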